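(* Let $\sigma$ be a positive finite Borel measure on $\partial\mathbb D$ with Poisson integral $u(z)=\int_{\partial\mathbb D}\frac{1-|z|^2}{|\xi-z|^2}d\sigma(\xi)$, and suppose there is $c>0$ with $\frac{\sigma(I)}{|I|}\ge c\,u(z_I)$ for every arc $I\subset\partial\mathbb D$. Then $\sigma$ is doubling: there is $C>0$ with $\sigma(2I)\le C\sigma(I)$ for every arc $I\subset\partial\mathbb D$.
   Context: $m$ is normalized Lebesgue measure on $\partial\mathbb D$, $|I|=m(I)$; $2I$ is the arc with the same center as $I$ and length $2|I|$ (the whole circle if $2|I|\ge1$); $z_I=(1-|I|)\xi_I$ with $\xi_I$ the center of $I$. *)

(* The unit circle is modelled inside R * R
   (product of Borel sigma-algebras = Borel sigma-algebra of R^2). *)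
From mathcomp Require Import all_boot all_order all_algebra.
From mathcomp Require Import all_classical all_reals all_analysis.
Unset Printing Implicit Defensive.
Import Order.TTheory GRing.Theory Num.Theory.
Local Open Scope ring_scope.
Local Open Scope classical_set_scope.

Definition circle (R : realType) : set (R * R) :=
  [set p | p.1 ^+ 2 + p.2 ^+ 2 = 1].

(* the closed circ_arc with center xi (a point of the circle) and normalized
   length l in (0,1]: points of the circle whose angular distance to xi is
   at most pi*l (half of the angle 2*pi*l). For l = 1 it is the whole circle. *)
Definition circ_arc (R : realType) (xi : R * R) (l : R) : set (R * R) :=
  [set p | circle R p /\ cos (pi * l) <= p.1 * xi.1 + p.2 * xi.2].

Definition z_arc (R : realType) (xi : R * R) (l : R) : R * R :=
  ((1 - l) * xi.1, (1 - l) * xi.2).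

Definition poisson_int (R : realType)
    (sigma : {measure set (R * R)%type -> \bar R}) (z : R * R) : \bar R :=
  (\int[sigma]_(p in circle R)
     ((1 - (z.1 ^+ 2 + z.2 ^+ 2)) / ((p.1 - z.1) ^+ 2 + (p.2 - z.2) ^+ 2))%:E)%E.

From mathcomp Require Import all_boot all_order all_algebra.
From mathcomp Require Import all_classical all_reals all_analysis.
From mathcomp Require Import ring lra.
Import Order.TTheory GRing.Theory Num.Theory numFieldNormedType.Exports.
Local Open Scope ring_scope.
Local Open Scope classical_set_scope.

(* On the doubled arc 2I one has 1 - <p, xi> <= 1 - cos (2 pi |I|) <= 2 pi^2 |I|^2,
   hence |p - z_I|^2 <= (1 + 4 pi^2) |I|^2 while 1 - |z_I|^2 >= |I|: the Poisson
   kernel at z_I is at least 1 / ((1 + 4 pi^2) |I|) on 2I.  Integrating,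
   sigma(2I) / ((1 + 4 pi^2) |I|) <= u(z_I) <= sigma(I) / (c |I|). *)

Lemma abs_sin_le {R : realType} (y : R) : 0 <= y -> `|sin y| <= y.
Proof.
rewrite le_eqVlt => /orP[/eqP <-|y0]; first by rewrite sin0 normr0.
have [|x _] := @MVT R sin cos 0 y y0 (fun x _ => is_derive_sin x).
  by apply/continuous_subspaceT => ?; exact: continuous_sin.
rewrite sin0 !subr0 => ->; rewrite normrM (gtr0_norm y0).
by rewrite ler_piMl ?(ltW y0) ?cos_max.
Qed.

Lemma one_sub_cos_le {R : realType} (x : R) : 0 <= x -> 1 - cos x <= x ^+ 2 / 2.
Proof.
move=> x0; set y := x / 2.
have y0 : 0 <= y by rewrite divr_ge0.
have -> : x = y *+ 2 by rewrite -mulr_natr divfK.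
have sin_le : sin y ^+ 2 <= y ^+ 2.
  by rewrite -real_normK ?num_real// ler_sqr ?nnegrE// abs_sin_le.
have := cos2Dsin2 y; rewrite cos_mulr2n; lra.
Qed.

Definition dot {R : numDomainType} (p q : R * R) : R := p.1 * q.1 + p.2 * q.2.

(* The integrand of [poisson_int], to which it is convertible. *)
Definition poisson_kernel {R : fieldType} (z p : R * R) : R :=
  (1 - (z.1 ^+ 2 + z.2 ^+ 2)) / ((p.1 - z.1) ^+ 2 + (p.2 - z.2) ^+ 2).

Lemma dot_le1 {R : realType} {p q : R * R} :
  circle R p -> circle R q -> dot p q <= 1.
Proof.
rewrite /circle /dot /= => hp hq.
have := sqr_ge0 (p.1 - q.1); have := sqr_ge0 (p.2 - q.2); lra.
Qed.

Lemma poisson_kernel_z_arc {R : realType} (xi p : R * R) (l : R) :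
  circle R xi -> circle R p ->
  poisson_kernel (z_arc R xi l) p = l * (2 - l) / (l ^+ 2 + 2 * (1 - l) * (1 - dot p xi)).
Proof.
rewrite /circle /poisson_kernel /z_arc /dot /= => hxi hp.
congr (_ / _).
  have -> : ((1 - l) * xi.1) ^+ 2 + ((1 - l) * xi.2) ^+ 2 =
            (1 - l) ^+ 2 * (xi.1 ^+ 2 + xi.2 ^+ 2) by ring.
  by rewrite hxi; ring.
have -> : (p.1 - (1 - l) * xi.1) ^+ 2 + (p.2 - (1 - l) * xi.2) ^+ 2 =
          (p.1 ^+ 2 + p.2 ^+ 2) + (1 - l) ^+ 2 * (xi.1 ^+ 2 + xi.2 ^+ 2)
          - 2 * (1 - l) * (p.1 * xi.1 + p.2 * xi.2) by ring.
by rewrite hp hxi; ring.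
Qed.

Lemma poisson_kernel_ratio_lb {R : realFieldType} (a d l : R) : 0 <= a -> 0 < l <= 1 ->
  0 <= d <= a * l ^+ 2 ->
  ((1 + 2 * a) * l)^-1 <= l * (2 - l) / (l ^+ 2 + 2 * (1 - l) * d).
Proof.
move=> a0 /andP[l0 l1] /andP[d0 da].
have D0 : 0 < l ^+ 2 + 2 * (1 - l) * d by nra.
rewrite ler_pdivlMr // mulrC ler_pdivrMr ?mulr_gt0 //; nra.
Qed.

Lemma one_sub_dot_arc_le {R : realType} {xi p : R * R} {m : R} : 0 <= m ->
  circ_arc R xi m p -> 1 - dot p xi <= (pi * m) ^+ 2 / 2.
Proof.
move=> m0 [_ hp]; have := @one_sub_cos_le _ (pi * m) (mulr_ge0 (pi_ge0 R) m0).
rewrite /dot; lra.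
Qed.

Definition kernel_const (R : realType) : R := 1 + 4 * pi ^+ 2.

Lemma kernel_const_gt0 (R : realType) : 0 < kernel_const R.
Proof. by rewrite ltr_pwDl // mulr_ge0 // sqr_ge0. Qed.

Lemma poisson_kernel_ge0 {R : realType} (xi p : R * R) (l : R) :
  circle R xi -> circle R p -> 0 <= l <= 1 -> 0 <= poisson_kernel (z_arc R xi l) p.
Proof.
move=> hxi hp /andP[l0 l1]; have := dot_le1 hp hxi.
rewrite poisson_kernel_z_arc // => hdot.
by rewrite divr_ge0 //; nra.
Qed.

Lemma poisson_kernel_double_arc_lb {R : realType} (xi p : R * R) (l : R) :
  circle R xi -> 0 < l <= 1 -> circ_arc R xi (Num.min (2 * l) 1) p ->
  (kernel_const R * l)^-1 <= poisson_kernel (z_arc R xi l) p.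
Proof.
move=> hxi /[dup] hl /andP[l0 _] /[dup] [[hp _]].
set m := Num.min (2 * l) 1 => hpA.
have m0 : 0 <= m by rewrite le_min ler01 mulr_ge0 ?ltW.
have m2l : m <= 2 * l by rewrite ge_min lexx.
have hd := one_sub_dot_arc_le m0 hpA.
have hm : (pi * m) ^+ 2 / 2 <= 2 * pi ^+ 2 * l ^+ 2.
  have m_sq : m ^+ 2 <= 4 * l ^+ 2 by nra.
  have := ler_wpM2l (sqr_ge0 pi) m_sq; rewrite exprMn; lra.
rewrite poisson_kernel_z_arc // (_ : kernel_const R = 1 + 2 * (2 * pi ^+ 2)).
  apply: poisson_kernel_ratio_lb => //; first by rewrite mulr_ge0 // sqr_ge0.
  by rewrite subr_ge0 dot_le1 //= (le_trans hd).
by rewrite /kernel_const; ring.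
Qed.

Lemma measurable_circle {R : realType} : measurable (circle R).
Proof.
have mf : measurable_fun setT (fun p : R * R => p.1 ^+ 2 + p.2 ^+ 2).
  by apply: measurable_realfun.measurable_funD; apply: measurable_realfun.measurable_funM.
by have := mf measurableT [set 1] (measurable_set1 _); rewrite setTI.
Qed.

Lemma measurable_circ_arc {R : realType} (xi : R * R) (l : R) :
  measurable (circ_arc R xi l).
Proof.
have mf : measurable_fun setT (fun p : R * R => dot p xi).
  by apply: measurable_realfun.measurable_funD; apply: measurable_realfun.measurable_funM.
have := mf measurableT `[cos (pi * l), +oo[%classic (measurable_itv _).
rewrite setTI => mpre.
suff -> : circ_arc R xi l =
    circle R `&` (fun p => dot p xi) @^-1` `[cos (pi * l), +oo[%classic.
  exact: measurableI measurable_circle mpre.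
by apply/seteqP; split => p /=; rewrite in_itv /= andbT.
Qed.

Lemma ge0_le_integral_nonmeasurable d (T : measurableType d) (R : realType)
    (mu : {measure set T -> \bar R}) (D : set T) (f g : T -> \bar R) :
  (forall x, D x -> (0 <= f x)%E) -> (forall x, D x -> (f x <= g x)%E) ->
  (\int[mu]_(x in D) f x <= \int[mu]_(x in D) g x)%E.
Proof.
move=> f0 fg.
have g0 x : D x -> (0 <= g x)%E by move=> Dx; exact: le_trans (f0 x Dx) (fg x Dx).
rewrite !ge0_integralE //; apply: ge_ereal_sup => _ [h hf <-].
apply: ereal_sup_ubound; exists h => // x; apply: le_trans (hf x) _.
by rewrite /patch; case: ifP => // /set_mem /fg.
Qed.

Lemma poisson_int_ge_double_arc {R : realType}
    (sigma : {measure set (R * R)%type -> \bar R}) (xi : R * R) (l : R) :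
  circle R xi -> 0 < l <= 1 ->
  (((kernel_const R * l)^-1)%R%:E * sigma (circ_arc R xi (Num.min (2 * l) 1)%R) <=
   poisson_int R sigma (z_arc R xi l))%E.
Proof.
move=> hxi /[dup] hl /andP[l0 l1].
set A := circ_arc R xi _; set k := (kernel_const R * l)^-1.
have k0 : 0 <= k by rewrite invr_ge0 mulr_ge0 ?ltW ?kernel_const_gt0.
have -> : (k%:E * sigma A = \int[sigma]_(p in circle R) (k * \1_A p)%:E)%E.
  rewrite (@integralZl_indic _ _ _ sigma _ measurable_circle (fun=> A) k).
  - have A_circle : A `<=` circle R by move=> p [].
    by rewrite integral_indic ?(setIidl A_circle) //;
      [exact: measurable_circle|exact: measurable_circ_arc].
  - by rewrite ltNge k0.
  - exact: measurable_circ_arc.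
apply: ge0_le_integral_nonmeasurable => p hp; first by rewrite lee_fin mulr_ge0.
rewrite lee_fin indicE; case: (boolP (p \in A)) => [/set_mem pA|_].
  by rewrite mulr1 poisson_kernel_double_arc_lb.
by rewrite mulr0 poisson_kernel_ge0 // (ltW l0) l1.
Qed.

Theorem mainTheorem16 (R : realType)
  (sigma : {finite_measure set (R * R)%type -> \bar R})
  (hsupp : sigma (~` circle R) = 0%E)
  (c : R) (hc : 0 < c)
  (hyp : forall (xi : R * R) (l : R), circle R xi -> 0 < l <= 1 ->
     (c%:E * poisson_int R sigma (z_arc R xi l) <= sigma (circ_arc R xi l) * (l^-1)%:E)%E) :
  exists2 C : R, 0 < C &
    forall (xi : R * R) (l : R), circle R xi -> 0 < l <= 1 ->
      (sigma (circ_arc R xi (Num.min (2 * l) 1)%R) <= C%:E * sigma (circ_arc R xi l))%E.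
Proof.
exists (kernel_const R / c); first by rewrite divr_gt0 ?kernel_const_gt0.
move=> xi l hxi /[dup] hl /andP[l0 _].
set A := circ_arc R xi (Num.min (2 * l) 1); set I := circ_arc R xi l.
have hA : (((kernel_const R * l)^-1)%:E * sigma A <= poisson_int R sigma (z_arc R xi l))%E.
  exact: poisson_int_ge_double_arc.
have hI := hyp xi l hxi hl; rewrite -/I in hI.
have [mA mI] : measurable A /\ measurable I by split; exact: measurable_circ_arc.
move: hA hI; rewrite -(fineK (fin_num_measure sigma A mA)) -(fineK (fin_num_measure sigma I mI)).
set a := fine (sigma A); set b := fine (sigma I) => hA hI.
have c0 : (0 <= c%:E)%E by rewrite lee_fin ltW.
have := le_trans (lee_wpmul2l c0 hA) hI; rewrite -!EFinM !lee_fin => hab.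
rewrite -(@ler_pM2l _ (c / (kernel_const R * l))) ?divr_gt0 ?mulr_gt0 ?kernel_const_gt0 //.
have -> : c / (kernel_const R * l) * (kernel_const R / c * b) = b * l^-1.
  by field; rewrite !gt_eqF ?kernel_const_gt0.
by rewrite mulrA in hab.
Qed.
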